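(* Let $A = \langle Q,\Sigma,F,\delta\rangle$ be a tree automaton and $R$ a left-linear term rewriting system over $\Sigma$. Suppose that for every rule $\ell \to r \in R$, every assignment $\alpha : \mathcal{X} \to Q$ and every $q \in Q$: if $\ell\alpha \rightsquigarrow_A^* q$, then there exists a term $t$ with $\ell \to_R^+ t$ and $t\alpha \rightsquigarrow_A^* q$. Then $L(A)$ is weakly closed under rewriting with respect to $R$, i.e. for every $s \in L(A)$ that is not a normal form of $\to_R$ there exists $s' \in L(A)$ with $s \to_R^+ s'$.
   Context: A tree automaton $A=\langle Q,\Sigma,F,\delta\rangle$ consists of a finite set of states $Q$, a finite signature $\Sigma$, final states $F\subseteq Q$, and transition rules $f(q_1,\ldots,q_n)\rightsquigarrow q$ ($f\in\Sigma$ of arity $n$, $q_i,q\in Q$). The relation $\rightsquigarrow_A$ is the rewrite relation on terms over $\Sigma\cup Q$ (states as constants) generated by these rules in arbitrary contexts, and $\rightsquigarrow_A^*$ its reflexive-transitive closure. $L(A)$ is the set of ground terms $t$ over $\Sigma$ with $t\rightsquigarrow_A^* q$ for some $q\in F$. $\mathcal{X}$ is the set of variables; for $\alpha:\mathcal{X}\to Q$ and a term $u$, $u\alpha$ is the term over $\Sigma\cup Q$ obtained by replacing each variable $x$ by $\alpha(x)$. A term rewriting system $R$ is a set of rules $\ell\to r$ ($\ell$ not a variable, variables of $r$ among those of $\ell$); $\to_R$ is the induced one-step rewrite relation, $\to_R^+$ its transitive closure; it is left-linear if no variable occurs more than once in any left-hand side. A normal form is a term with no $\to_R$-step. *)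

From Stdlib Require Import List Relations FinFun.
Import ListNotations.
Set Implicit Arguments.

Section Terms.
Variable Sig : Type.

(* Terms over the signature Sig whose leaves are elements of L
   (L = variables X for ordinary terms, L = states Q for terms over Sigma u Q). *)
Inductive term (L : Type) : Type :=
| Leaf : L -> term L
| Fun : Sig -> list (term L) -> term L.

Arguments Leaf {L}.
Arguments Fun {L}.

Fixpoint wf (ar : Sig -> nat) {L} (t : term L) : Prop :=
  match t with
  | Leaf _ => True
  | Fun f ts => length ts = ar f /\
      (fix wfl (us : list (term L)) : Prop :=
         match us with [] => True | u :: us' => wf ar u /\ wfl us' end) ts
  end.

Fixpoint leaves {L} (t : term L) : list L :=
  match t with
  | Leaf x => [x]
  | Fun _ ts =>
      (fix lv (us : list (term L)) : list L :=
         match us with [] => [] | u :: us' => leaves u ++ lv us' end) ts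
  end.

Definition ground {L} (t : term L) : Prop := leaves t = [].

Fixpoint subst {L M} (s : L -> term M) (t : term L) : term M :=
  match t with
  | Leaf x => s x
  | Fun f ts => Fun f (map (subst s) ts)
  end.

Definition assign {X Q} (alpha : X -> Q) (t : term X) : term Q :=
  subst (fun x => Leaf (alpha x)) t.

Inductive rstep {X} (R : term X -> term X -> Prop) : term X -> term X -> Prop :=
| rstep_root : forall l r (sigma : X -> term X),
    R l r -> rstep R (subst sigma l) (subst sigma r)
| rstep_ctx : forall f ts1 t t' ts2,
    rstep R t t' -> rstep R (Fun f (ts1 ++ t :: ts2)) (Fun f (ts1 ++ t' :: ts2)).

Definition is_TRS (ar : Sig -> nat) {X} (R : term X -> term X -> Prop) : Prop :=
  forall l r, R l r ->
    (forall x, l <> Leaf x) /\ incl (leaves r) (leaves l) /\ wf ar l /\ wf ar r.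

Definition left_linear {X} (R : term X -> term X -> Prop) : Prop :=
  forall l r, R l r -> NoDup (leaves l).

Definition normal_form {X} (R : term X -> term X -> Prop) (t : term X) : Prop :=
  ~ exists u, rstep R t u.

Record tree_automaton (ar : Sig -> nat) : Type := TA {
  ta_Q : Type;
  ta_Q_finite : Finite ta_Q;
  ta_final : ta_Q -> Prop;
  ta_delta : list (Sig * list ta_Q * ta_Q);
  ta_delta_ar : forall f qs q, In (f, qs, q) ta_delta -> length qs = ar f
}.

Inductive tastep (ar : Sig -> nat) (A : tree_automaton ar)
  : term (ta_Q A) -> term (ta_Q A) -> Prop :=
| tastep_root : forall f qs q, In (f, qs, q) (ta_delta A) ->
    tastep A (Fun f (map Leaf qs)) (Leaf q)
| tastep_ctx : forall f ts1 t t' ts2,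
    tastep A t t' -> tastep A (Fun f (ts1 ++ t :: ts2)) (Fun f (ts1 ++ t' :: ts2)).

Definition tareach (ar : Sig -> nat) (A : tree_automaton ar) :=
  clos_refl_trans _ (tastep A).

(* L(A): ground terms over Sig (written as terms over X without variables)
   that the automaton reduces to a final state. For a ground term, t alpha
   does not depend on alpha. *)
Definition lang (ar : Sig -> nat) (A : tree_automaton ar) {X} (t : term X) : Prop :=
  ground t /\ wf ar t /\
  exists (alpha : X -> ta_Q A) q, ta_final A q /\ tareach A (assign alpha t) (Leaf q).

End Terms.

Arguments Leaf {Sig L}.
Arguments Fun {Sig L}.

(* Take a rewrite step of [s] at a redex [l sigma]. The accepting run of [A] on [s]
   labels the redex with a state [q] and each [sigma x] with a state; as [l] is
   linear, these states form one assignment [alpha] with [l alpha ~>* q]. The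
   hypothesis gives [l ->+ t] with [t alpha ~>* q], and reinserting the runs on the
   [sigma x] yields a run of [t sigma] to [q], so the context run still ends in the
   same final state. Rewriting keeps terms ground and well-formed because rules do
   not introduce variables. *)

From Stdlib Require Import List Relations FinFun.
From Stdlib Require Import Classical ClassicalEpsilon.
Import ListNotations.
Set Implicit Arguments.

Fixpoint term_nested_ind (Sig L : Type) (P : term Sig L -> Prop)
  (HL : forall x, P (Leaf x)) (HF : forall f ts, Forall P ts -> P (Fun f ts))
  (t : term Sig L) : P t :=
  match t with
  | Leaf x => HL x
  | Fun f ts => HF f ts
      ((fix go (us : list (term Sig L)) : Forall P us :=
         match us with
         | [] => Forall_nil _
         | u :: us' => Forall_cons _ (term_nested_ind HL HF u) (go us')
         end) ts)
  end.

Lemma NoDup_app_disjoint (T : Type) (l1 l2 : list T) (x : T) :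
  NoDup (l1 ++ l2) -> In x l1 -> ~ In x l2.
Proof.
  induction l1 as [|y l1 IH]; simpl; intros Hnd Hx; [contradiction|].
  inversion Hnd as [|? ? Hy Hnd']; subst.
  destruct Hx as [<-|Hx]; auto.
  intros Hx2; apply Hy, in_or_app; auto.
Qed.
Arguments NoDup_app_disjoint {T l1 l2 x}.

Section Terms.
Variable Sig : Type.

Lemma leaves_Fun L f (ts : list (term Sig L)) :
  leaves (Fun f ts) = flat_map (@leaves Sig L) ts.
Proof. induction ts; simpl; [reflexivity|f_equal; exact IHts]. Qed.

Lemma wf_Fun ar L f (ts : list (term Sig L)) :
  wf ar (Fun f ts) <-> length ts = ar f /\ Forall (wf ar) ts.
Proof.
  simpl; split; intros [Hlen Hts]; split; auto; clear Hlen.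
  - induction ts; [constructor|]. destruct Hts; constructor; auto.
  - induction Hts; simpl; auto.
Qed.

Lemma subst_subst L M N (s : M -> term Sig N) (r : L -> term Sig M) t :
  subst s (subst r t) = subst (fun x => subst s (r x)) t.
Proof.
  induction t using term_nested_ind; simpl; auto.
  f_equal; rewrite map_map; induction H; simpl; f_equal; auto.
Qed.

Lemma subst_ext L M (s r : L -> term Sig M) t :
  (forall x, In x (leaves t) -> s x = r x) -> subst s t = subst r t.
Proof.
  induction t using term_nested_ind; intros Hsr; simpl.
  - apply Hsr; simpl; auto.
  - rewrite leaves_Fun in Hsr; f_equal.
    induction H; simpl in *; f_equal; auto using in_or_app.
Qed.

Lemma leaves_subst L M (s : L -> term Sig M) t :
  leaves (subst s t) = flat_map (fun x => leaves (s x)) (leaves t).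
Proof.
  induction t using term_nested_ind.
  - simpl; rewrite app_nil_r; reflexivity.
  - change (subst s (Fun f ts)) with (Fun f (map (subst s) ts)).
    rewrite !leaves_Fun; induction H; simpl; auto.
    rewrite flat_map_app; congruence.
Qed.

Lemma wf_subst_inv ar L M (s : L -> term Sig M) t :
  wf ar (subst s t) -> forall x, In x (leaves t) -> wf ar (s x).
Proof.
  induction t using term_nested_ind; intros Hw y Hy.
  - destruct Hy as [<-|[]]; auto.
  - rewrite leaves_Fun in Hy.
    apply (proj1 (wf_Fun _ _ _)) in Hw; destruct Hw as [_ Hw].
    induction H; simpl in *; [contradiction|].
    inversion Hw; subst; apply in_app_or in Hy; destruct Hy; eauto.
Qed.

Lemma wf_subst ar L M (s : L -> term Sig M) t :
  wf ar t -> (forall x, In x (leaves t) -> wf ar (s x)) -> wf ar (subst s t).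
Proof.
  induction t using term_nested_ind; intros Hw Hs; simpl.
  - apply Hs; simpl; auto.
  - apply wf_Fun in Hw; destruct Hw as [Hlen Hw].
    apply wf_Fun; rewrite length_map; split; auto; clear Hlen.
    rewrite leaves_Fun in Hs.
    induction H; inversion Hw; subst; simpl in *; constructor; auto using in_or_app.
Qed.

End Terms.

Section Rewriting.
Variables (Sig X : Type) (ar : Sig -> nat) (R : term Sig X -> term Sig X -> Prop).
Notation rsteps := (clos_trans _ (rstep R)).

Lemma rstep_subst (s : X -> term Sig X) a b :
  rstep R a b -> rstep R (subst s a) (subst s b).
Proof.
  induction 1.
  - rewrite !subst_subst; constructor; auto.
  - simpl; rewrite !map_app; constructor; auto.
Qed.

Lemma rsteps_subst (s : X -> term Sig X) a b :
  rsteps a b -> rsteps (subst s a) (subst s b).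
Proof. induction 1; eauto using t_step, t_trans, rstep_subst. Qed.

Lemma rsteps_ctx f ts1 t t' ts2 :
  rsteps t t' -> rsteps (Fun f (ts1 ++ t :: ts2)) (Fun f (ts1 ++ t' :: ts2)).
Proof. induction 1; eauto using t_step, t_trans, rstep_ctx. Qed.

Hypothesis R_TRS : is_TRS ar R.

Lemma rstep_leaves a b : rstep R a b -> incl (leaves b) (leaves a).
Proof.
  induction 1 as [l r s Hlr|f ts1 t t' ts2 _ IH]; intros x Hx.
  - rewrite leaves_subst in *; apply in_flat_map in Hx.
    destruct Hx as [y [Hy Hx]]; apply in_flat_map.
    exists y; split; auto; apply (R_TRS Hlr); auto.
  - rewrite leaves_Fun, flat_map_app in *; simpl in *.
    apply in_app_or in Hx; apply in_or_app; destruct Hx as [Hx|Hx]; auto.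
    right; apply in_app_or in Hx; apply in_or_app; destruct Hx; auto.
Qed.

Lemma rsteps_leaves a b : rsteps a b -> incl (leaves b) (leaves a).
Proof. induction 1; eauto using rstep_leaves, incl_tran. Qed.

Lemma rsteps_ground a b : rsteps a b -> ground a -> ground b.
Proof.
  unfold ground; intros Hab Ha; apply rsteps_leaves in Hab; rewrite Ha in Hab.
  destruct (leaves b) as [|x l]; auto.
  destruct (Hab x); simpl; auto.
Qed.

Lemma rstep_wf a b : rstep R a b -> wf ar a -> wf ar b.
Proof.
  induction 1 as [l r s Hlr|f ts1 t t' ts2 _ IH]; intros Hw.
  - destruct (R_TRS Hlr) as [_ [Hincl [_ Hr]]].
    apply wf_subst; auto; intros x Hx; eapply wf_subst_inv; eauto.
  - apply wf_Fun in Hw; apply wf_Fun; destruct Hw as [Hlen Hw].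
    rewrite length_app in *; simpl in *; split; auto.
    apply Forall_app in Hw; destruct Hw as [Hw1 Hw2]; inversion Hw2; subst.
    apply Forall_app; split; auto.
Qed.

Lemma rsteps_wf a b : rsteps a b -> wf ar a -> wf ar b.
Proof. induction 1; eauto using rstep_wf. Qed.

End Rewriting.

Section Automaton.
Variables (Sig : Type) (ar : Sig -> nat) (A : tree_automaton ar).
Notation Q := (ta_Q A).

(* Big-step runs, equivalent to [tareach] but decomposable along the term. *)
Inductive acc : term Sig Q -> Q -> Prop :=
| acc_leaf q : acc (Leaf q) q
| acc_fun f ts qs q :
    In (f, qs, q) (ta_delta A) -> Forall2 acc ts qs -> acc (Fun f ts) q.

Lemma acc_tastep_inv t t' : tastep A t t' -> forall q, acc t' q -> acc t q.
Proof.
  induction 1 as [f qs q Hin|f ts1 t t' ts2 _ IH]; intros q' Hacc.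
  - inversion Hacc; subst; apply acc_fun with qs; auto.
    clear Hin; induction qs; simpl; constructor; auto using acc_leaf.
  - inversion Hacc as [|? ? qs ? Hin Hargs]; subst.
    apply Forall2_app_inv_l in Hargs; destruct Hargs as [qs1 [qs2 [H1 [H2 ->]]]].
    inversion H2 as [|? qt ? qs2' Hqt Hqs]; subst.
    apply acc_fun with (qs1 ++ qt :: qs2'); auto.
    apply Forall2_app; auto.
Qed.

Lemma tareach_acc t q : tareach A t (Leaf q) -> acc t q.
Proof.
  intros H; apply clos_rt_rt1n in H; remember (Leaf q) as z.
  induction H; subst; eauto using acc_leaf, acc_tastep_inv.
Qed.

Lemma tareach_ctx f ts1 t u ts2 :
  tareach A t u -> tareach A (Fun f (ts1 ++ t :: ts2)) (Fun f (ts1 ++ u :: ts2)).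
Proof.
  induction 1; [apply rt_step, tastep_ctx; auto|apply rt_refl|eapply rt_trans; eauto].
Qed.

Lemma tareach_args f ts us :
  Forall2 (tareach A) ts us ->
  forall ts1, tareach A (Fun f (ts1 ++ ts)) (Fun f (ts1 ++ us)).
Proof.
  induction 1 as [|t u ts us Htu _ IH]; intros ts1; [apply rt_refl|].
  apply rt_trans with (Fun f (ts1 ++ u :: ts)); [apply tareach_ctx; auto|].
  specialize (IH (ts1 ++ [u])); rewrite <- !app_assoc in IH; exact IH.
Qed.

Lemma acc_tareach t q : acc t q -> tareach A t (Leaf q).
Proof.
  revert q; induction t using term_nested_ind; intros q Hacc.
  - inversion Hacc; subst; apply rt_refl.
  - inversion Hacc as [|? ? qs ? Hin Hargs]; subst.
    apply rt_trans with (Fun f (map Leaf qs)); [|apply rt_step, tastep_root; auto].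
    apply (tareach_args f) with (ts1 := []); clear Hin Hacc.
    revert qs Hargs; induction H; intros qs Hargs; inversion Hargs; subst;
      simpl; constructor; auto.
Qed.

Variable X : Type.

Lemma acc_subst (tau : X -> term Sig Q) (alpha : X -> Q) t q :
  acc (assign alpha t) q -> (forall x, In x (leaves t) -> acc (tau x) (alpha x)) ->
  acc (subst tau t) q.
Proof.
  revert q; induction t using term_nested_ind; intros q Hacc Htau.
  - inversion Hacc; subst; apply Htau; simpl; auto.
  - inversion Hacc as [|? ? qs ? Hin Hargs]; subst.
    apply acc_fun with qs; auto; rewrite leaves_Fun in Htau; clear Hin Hacc.
    revert qs Hargs; induction H; intros qs Hargs; inversion Hargs; subst;
      simpl in *; constructor; auto using in_or_app.
Qed.

Lemma acc_subst_linear (tau : X -> term Sig Q) l q :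
  NoDup (leaves l) -> acc (subst tau l) q ->
  exists alpha, (forall x, In x (leaves l) -> acc (tau x) (alpha x)) /\
    acc (assign alpha l) q.
Proof.
  revert q; induction l using term_nested_ind; intros q Hnd Hacc.
  - exists (fun _ => q); simpl; split; [intros y [<-|[]]; auto|constructor].
  - inversion Hacc as [|? ? qs ? Hin Hargs]; subst; rewrite leaves_Fun in *.
    enough (exists alpha,
      (forall x, In x (flat_map (@leaves Sig X) ts) -> acc (tau x) (alpha x)) /\
      Forall2 acc (map (assign alpha) ts) qs) as [alpha [? ?]]
      by (exists alpha; split; auto; apply acc_fun with qs; auto).
    clear Hin Hacc; revert qs Hargs Hnd; induction H as [|t ts Ht _ IH];
      intros qs Hargs Hnd; inversion Hargs as [|? qt ? qs' Hqt Hqs]; subst.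
    + exists (fun _ => q); split; [intros _ []|constructor].
    + simpl in Hnd.
      destruct (Ht qt (NoDup_app_remove_r _ _ Hnd) Hqt) as [alpha1 [Htau1 Hacc1]].
      destruct (IH qs' Hqs (NoDup_app_remove_l _ _ Hnd)) as [alpha2 [Htau2 Hacc2]].
      (* The variable sets of [t] and [ts] are disjoint, so the two runs merge. *)
      set (alpha x := if excluded_middle_informative (In x (leaves t))
                      then alpha1 x else alpha2 x).
      assert (E1 : forall x, In x (leaves t) -> alpha x = alpha1 x)
        by (intros x Hx; unfold alpha; destruct excluded_middle_informative; tauto).
      assert (E2 : forall x, In x (flat_map (@leaves Sig X) ts) -> alpha x = alpha2 x)
        by (intros x Hx; unfold alpha; destruct excluded_middle_informative as [Ht'|];
            [destruct (NoDup_app_disjoint Hnd Ht' Hx)|reflexivity]).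
      exists alpha; simpl; split.
      * intros x Hx; apply in_app_or in Hx; destruct Hx as [Hx|Hx];
          [rewrite E1|rewrite E2]; auto.
      * constructor.
        -- unfold assign; erewrite subst_ext; [exact Hacc1|].
           intros x Hx; simpl; rewrite E1; auto.
        -- erewrite map_ext_in; [exact Hacc2|].
           intros u Hu; apply subst_ext; intros x Hx; simpl; rewrite E2; auto.
           apply in_flat_map; eauto.
Qed.

End Automaton.

Section WeakClosure.
Variables (Sig X : Type) (ar : Sig -> nat) (A : tree_automaton ar)
  (R : term Sig X -> term Sig X -> Prop).
Notation rsteps := (clos_trans _ (rstep R)).

Hypothesis R_TRS : is_TRS ar R.
Hypothesis R_left_linear : left_linear R.
Hypothesis R_rules_closed : forall l r, R l r -> forall alpha q,
  acc A (assign alpha l) q -> exists t, rsteps l t /\ acc A (assign alpha t) q.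

Lemma rstep_acc_progress alpha s u : rstep R s u -> forall q,
  acc A (assign alpha s) q -> exists s', rsteps s s' /\ acc A (assign alpha s') q.
Proof.
  induction 1 as [l r sigma Hlr|f ts1 t t' ts2 _ IH]; intros q Hacc.
  - unfold assign in Hacc; rewrite subst_subst in Hacc.
    destruct (acc_subst_linear _ l (R_left_linear Hlr) Hacc) as [beta [Hsigma Hl]].
    destruct (R_rules_closed Hlr beta Hl) as [t [Hlt Ht]].
    exists (subst sigma t); split; [apply rsteps_subst; auto|].
    unfold assign; rewrite subst_subst; apply (acc_subst _ _ _ Ht).
    intros x Hx; apply Hsigma, (rsteps_leaves R_TRS Hlt); auto.
  - unfold assign in Hacc; simpl in Hacc; rewrite map_app in Hacc; simpl in Hacc.
    inversion Hacc as [|? ? qs ? Hin Hargs]; subst.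
    apply Forall2_app_inv_l in Hargs; destruct Hargs as [qs1 [qs2 [H1 [H2 ->]]]].
    inversion H2 as [|? qt ? qs2' Hqt Hqs]; subst.
    destruct (IH _ Hqt) as [t'' [Ht't'' Hacc'']].
    exists (Fun f (ts1 ++ t'' :: ts2)); split; [apply rsteps_ctx; auto|].
    unfold assign; simpl; rewrite map_app; simpl.
    apply acc_fun with (qs1 ++ qt :: qs2'); auto; apply Forall2_app; auto.
Qed.

End WeakClosure.

Theorem mainTheorem3 (Sig : Type) (ar : Sig -> nat) (Sig_fin : Finite Sig)
  (X : Type) (A : tree_automaton ar) (R : term Sig X -> term Sig X -> Prop) :
  is_TRS ar R ->
  left_linear R ->
  (forall l r, R l r ->
     forall (alpha : X -> ta_Q A) (q : ta_Q A),
       tareach A (assign alpha l) (Leaf q) ->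
       exists t, clos_trans _ (rstep R) l t /\ tareach A (assign alpha t) (Leaf q)) ->
  forall s, lang A s -> ~ normal_form R s ->
  exists s', lang A s' /\ clos_trans _ (rstep R) s s'.
Proof.
  intros HT HL HC s [Hground [Hwf [alpha [q [Hfinal Hrun]]]]] Hnf.
  apply NNPP in Hnf; destruct Hnf as [u Hsu].
  assert (HC' : forall l r, R l r -> forall alpha q, acc A (assign alpha l) q ->
    exists t, clos_trans _ (rstep R) l t /\ acc A (assign alpha t) q).
  { intros l r Hlr beta p Hl.
    destruct (HC l r Hlr beta p (acc_tareach Hl)) as [t [Hlt Ht]].
    exists t; split; auto; apply tareach_acc; auto. }
  destruct (rstep_acc_progress HT HL HC' alpha Hsu (tareach_acc Hrun)) as [s' [Hss' Hrun']].
  exists s'; repeat split; auto.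
  - apply (rsteps_ground HT Hss' Hground).
  - apply (rsteps_wf HT Hss' Hwf).
  - exists alpha, q; split; auto; apply acc_tareach; auto.
Qed.
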